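(* Let $E$ be a computable abelian group with computable subgroups $A,B,G,H$ such that $E = A\oplus G = B\oplus H$ (internal direct sums), where $A$ and $B$ are isomorphic and cyclic, and let $D=G\cap H$. Let $u\in G$ and $v\in H$ be such that $G=\langle u\rangle\oplus D$ and $H=\langle v\rangle\oplus D$. Then, uniformly in indices for $E,A,B,G,H$ and in $u$ and $v$, one can compute (an index for) a computable isomorphism between $G$ and $H$.
   Context: A computable group is given by an index for a program computing its atomic diagram (domain a subset of $\omega$); a computable subgroup is one whose underlying set is computable, given by an index of its characteristic function. *)

From Stdlib Require Import Arith.

(* Cantor pairing: a bijection nat * nat -> nat. *)
Definition pair (x y : nat) : nat := (x + y) * (x + y + 1) / 2 + y.

(* Syntax of partial recursive functions (unary, via pairing). *)
Inductive prf : Type :=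
| PZero | PSucc | PId | PFst | PSnd
| PPair (f g : prf)
| PComp (f g : prf)
| PPrim (f g : prf)
| PMu (f : prf).

Inductive eval : prf -> nat -> nat -> Prop :=
| ev_zero x : eval PZero x 0
| ev_succ x : eval PSucc x (S x)
| ev_id x : eval PId x x
| ev_fst a b : eval PFst (pair a b) a
| ev_snd a b : eval PSnd (pair a b) b
| ev_pair f g x a b : eval f x a -> eval g x b -> eval (PPair f g) x (pair a b)
| ev_comp f g x y z : eval g x y -> eval f y z -> eval (PComp f g) x z
| ev_prim0 f g x y : eval f x y -> eval (PPrim f g) (pair x 0) y
| ev_primS f g x n y z :
    eval (PPrim f g) (pair x n) y -> eval g (pair x (pair n y)) z ->
    eval (PPrim f g) (pair x (S n)) z
| ev_mu f x n :
    eval f (pair x n) 0 ->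
    (forall m, m < n -> exists k, eval f (pair x m) (S k)) ->
    eval (PMu f) x n.

Fixpoint encode (p : prf) : nat :=
  match p with
  | PZero => pair 0 0
  | PSucc => pair 1 0
  | PId => pair 2 0
  | PFst => pair 3 0
  | PSnd => pair 4 0
  | PPair f g => pair 5 (pair (encode f) (encode g))
  | PComp f g => pair 6 (pair (encode f) (encode g))
  | PPrim f g => pair 7 (pair (encode f) (encode g))
  | PMu f => pair 8 (encode f)
  end.

(* phi e x y : the e-th partial computable function halts on x with output y
   (numbers that code no program index the empty function). *)
Definition phi (e x y : nat) : Prop := exists p, encode p = e /\ eval p x y.

Definition IsAbGroup (dom : nat -> bool) (add : nat -> nat -> nat)
  (neg : nat -> nat) (z : nat) : Prop :=
  dom z = true /\
  (forall x y, dom x = true -> dom y = true -> dom (add x y) = true) /\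
  (forall x, dom x = true -> dom (neg x) = true) /\
  (forall x y w, dom x = true -> dom y = true -> dom w = true ->
     add x (add y w) = add (add x y) w) /\
  (forall x y, dom x = true -> dom y = true -> add x y = add y x) /\
  (forall x, dom x = true -> add z x = x) /\
  (forall x, dom x = true -> add (neg x) x = z).

(* Convention for "index e for a program computing the atomic diagram":
   phi_e <0,x> = 1 or 0 according as x is in the domain;
   phi_e <1,<x,y>> = x + y,  phi_e <2,x> = -x  (x, y in the domain);
   phi_e <3,0> = the zero element. *)
Definition Presents (e : nat) (dom : nat -> bool) (add : nat -> nat -> nat)
  (neg : nat -> nat) (z : nat) : Prop :=
  (forall x, phi e (pair 0 x) (if dom x then 1 else 0)) /\
  (forall x y, dom x = true -> dom y = true -> phi e (pair 1 (pair x y)) (add x y)) /\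
  (forall x, dom x = true -> phi e (pair 2 x) (neg x)) /\
  phi e (pair 3 0) z.

Definition CharIndex (s : nat) (mem : nat -> bool) : Prop :=
  forall x, phi s x (if mem x then 1 else 0).

Definition IsSubgroup (dom : nat -> bool) (add : nat -> nat -> nat)
  (neg : nat -> nat) (z : nat) (mem : nat -> bool) : Prop :=
  (forall x, mem x = true -> dom x = true) /\
  mem z = true /\
  (forall x y, mem x = true -> mem y = true -> mem (add x y) = true) /\
  (forall x, mem x = true -> mem (neg x) = true).

Definition natmul (add : nat -> nat -> nat) (z : nat) (n x : nat) : nat :=
  Nat.iter n (add x) z.

Definition InCyclic (add : nat -> nat -> nat) (neg : nat -> nat) (z : nat)
  (x y : nat) : Prop :=
  exists n, y = natmul add z n x \/ y = neg (natmul add z n x).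

Definition IsCyclic (add : nat -> nat -> nat) (neg : nat -> nat) (z : nat)
  (mem : nat -> bool) : Prop :=
  exists a, mem a = true /\ forall x, mem x = true <-> InCyclic add neg z a x.

Definition InternalDirectSum (add : nat -> nat -> nat) (z : nat)
  (M M1 M2 : nat -> Prop) : Prop :=
  (forall x, M1 x -> M x) /\ (forall x, M2 x -> M x) /\
  (forall x, M1 x -> M2 x -> x = z) /\
  (forall x, M x -> exists a b, M1 a /\ M2 b /\ x = add a b).

Definition SubgroupsIsomorphic (add : nat -> nat -> nat)
  (memA memB : nat -> bool) : Prop :=
  exists h : nat -> nat,
    (forall x, memA x = true -> memB (h x) = true) /\
    (forall x y, memA x = true -> memA y = true -> h x = h y -> x = y) /\
    (forall y, memB y = true -> exists x, memA x = true /\ h x = y) /\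
    (forall x y, memA x = true -> memA y = true -> h (add x y) = add (h x) (h y)).

Definition IsComputableIso (i : nat) (add : nat -> nat -> nat)
  (memG memH : nat -> bool) : Prop :=
  (forall x, memG x = true -> exists y, phi i x y /\ memH y = true) /\
  (forall x y w, memG x = true -> memG y = true -> phi i x w -> phi i y w -> x = y) /\
  (forall y, memH y = true -> exists x, memG x = true /\ phi i x y) /\
  (forall x y a b, memG x = true -> memG y = true -> phi i x a -> phi i y b ->
     phi i (add x y) (add a b)).

From Stdlib Require Import Arith Lia ZArith Classical.

(* Let α generate A and β be its image under an isomorphism A ≅ B, so that α and β have the
   same annihilator in ℤ.
   Since E = A ⊕ ⟨u⟩ ⊕ D, if m u = 0 then m β and m v both lie in ⟨m α⟩ + m D; comparing them,
   some multiple of m β differs from a multiple of m v by an element of D ⊆ H, hence lies in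
   B ∩ H = 0.  This kills the α-part of m v, so m v ∈ ⟨v⟩ ∩ D = 0.  By symmetry u and v have the
   same order, and k u + d ↦ k v + d (d ∈ D) is a well-defined isomorphism G → H.  It is
   computable: on x ∈ G, search for c ∈ ℤ with x + c u ∈ H (then x + c u ∈ D) and output
   x + c u - c v.  The code of this program depends only on the indices of E and H and on u, v,
   and is computed from them by writing out a fixed program template with these data filled in. *)

(** * Cantor pairing and programs *)

Definition triangle (s : nat) : nat := s * (s + 1) / 2.

Lemma pair_triangle x y : pair x y = triangle (x + y) + y.
Proof. reflexivity. Qed.

Lemma triangle_S s : triangle (S s) = triangle s + S s.
Proof.
  unfold triangle. replace (S s * (S s + 1)) with (s * (s + 1) + S s * 2) by nia.
  now rewrite Nat.div_add.
Qed.

Lemma triangle_le s s' : s <= s' -> triangle s <= triangle s'.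
Proof. induction 1; [lia | rewrite triangle_S; lia]. Qed.

Lemma pair_inj a b c d : pair a b = pair c d -> a = c /\ b = d.
Proof.
  rewrite !pair_triangle; intros E.
  assert (Ediag : a + b = c + d).
  { destruct (lt_eq_lt_dec (a + b) (c + d)) as [[Hlt | Heq] | Hlt]; [| exact Heq |];
      pose proof (triangle_le _ _ Hlt) as Hle; rewrite triangle_S in Hle; lia. }
  rewrite Ediag in E. lia.
Qed.

Lemma pair_surj n : exists a b, n = pair a b.
Proof.
  induction n as [| n [[| a] [b ->]]].
  - now exists 0, 0.
  - exists (S b), 0. rewrite !pair_triangle, !Nat.add_0_r. simpl (0 + b). rewrite triangle_S. lia.
  - exists a, (S b). rewrite !pair_triangle. replace (a + S b) with (S a + b); lia.
Qed.

Ltac pair_inversion :=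
  repeat match goal with
  | H : pair _ _ = pair _ _ |- _ => apply pair_inj in H; destruct H; subst
  | H : S _ = S _ |- _ => apply Nat.succ_inj in H; subst
  end.

Lemma encode_inj p q : encode p = encode q -> p = q.
Proof.
  revert q; induction p; destruct q; simpl; intro E; pair_inversion;
    try discriminate; f_equal; auto.
Qed.

Lemma eval_PPrim_0_inv f g x y : eval (PPrim f g) (pair x 0) y -> eval f x y.
Proof.
  intro Hy; inversion Hy; pair_inversion; [assumption | discriminate].
Qed.

Lemma eval_PPrim_S_inv f g x n y : eval (PPrim f g) (pair x (S n)) y ->
  exists r, eval (PPrim f g) (pair x n) r /\ eval g (pair x (pair n r)) y.
Proof.
  intro Hy; inversion Hy; pair_inversion; [discriminate | eauto].
Qed.

Lemma eval_PPrim_det f g :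
  (forall x y y', eval f x y -> eval f x y' -> y = y') ->
  (forall x y y', eval g x y -> eval g x y' -> y = y') ->
  forall n x y y', eval (PPrim f g) (pair x n) y -> eval (PPrim f g) (pair x n) y' -> y = y'.
Proof.
  intros Hf Hg n; induction n as [| n IH]; intros x y y' Hy Hy'.
  - apply eval_PPrim_0_inv in Hy, Hy'. eauto.
  - apply eval_PPrim_S_inv in Hy as [r [Hr Hy]], Hy' as [r' [Hr' Hy']].
    rewrite (IH _ _ _ Hr Hr') in Hy. eauto.
Qed.

Lemma eval_det p : forall x y y', eval p x y -> eval p x y' -> y = y'.
Proof.
  induction p as [| | | | | f IHf g IHg | f IHf g IHg | f IHf g IHg | f IHf];
    intros x y y' Hy Hy'.
  1-5: inversion Hy; inversion Hy'; subst; pair_inversion; reflexivity.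
  - inversion Hy as [| | | | | ? ? ? a b Ha Hb | | | |].
    inversion Hy' as [| | | | | ? ? ? a' b' Ha' Hb' | | | |].
    now rewrite (IHf _ _ _ Ha Ha'), (IHg _ _ _ Hb Hb').
  - inversion Hy as [| | | | | | ? ? ? m ? Hgm Hfm | | |].
    inversion Hy' as [| | | | | | ? ? ? m' ? Hgm' Hfm' | | |]. subst.
    rewrite (IHg _ _ _ Hgm Hgm') in Hfm. exact (IHf _ _ _ Hfm Hfm').
  - destruct (pair_surj x) as [a [n ->]]. exact (eval_PPrim_det f g IHf IHg n a y y' Hy Hy').
  - inversion Hy as [| | | | | | | | | ? ? ? Hzero Hpos].
    inversion Hy' as [| | | | | | | | | ? ? ? Hzero' Hpos'].
    destruct (lt_eq_lt_dec y y') as [[Hlt | Heq] | Hlt]; [| exact Heq |].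
    + destruct (Hpos' _ Hlt) as [k Hk]. discriminate (IHf _ _ _ Hzero Hk).
    + destruct (Hpos _ Hlt) as [k Hk]. discriminate (IHf _ _ _ Hzero' Hk).
Qed.

Lemma phi_encode p x y : phi (encode p) x y <-> eval p x y.
Proof.
  split.
  - intros [q [Hq Hy]]. apply encode_inj in Hq as ->. exact Hy.
  - intro Hy. now exists p.
Qed.

Lemma computable_iso_of_graph p (add : nat -> nat -> nat) (memG memH : nat -> bool)
    (R : nat -> nat -> Prop) :
  (forall x, memG x = true -> exists y, eval p x y /\ R x y) ->
  (forall x y, R x y -> memG x = true /\ memH y = true) ->
  (forall x y y', R x y -> R x y' -> y = y') ->
  (forall x x' y, R x y -> R x' y -> x = x') ->
  (forall y, memH y = true -> exists x, R x y) ->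
  (forall x y x' y', R x y -> R x' y' -> R (add x x') (add y y')) ->
  IsComputableIso (encode p) add memG memH.
Proof.
  intros Hprog Hmem Hfun Hinj Hsurj Hadd.
  assert (Hgraph : forall x y, memG x = true -> eval p x y -> R x y).
  { intros x y Hx Hy. destruct (Hprog x Hx) as [y' [Hy' HR]].
    now rewrite (eval_det _ _ _ _ Hy Hy'). }
  assert (Heval : forall x y, R x y -> eval p x y).
  { intros x y HR. destruct (Hprog x (proj1 (Hmem _ _ HR))) as [y' [Hy' HR']].
    now rewrite (Hfun _ _ _ HR HR'). }
  repeat split.
  - intros x Hx. destruct (Hprog x Hx) as [y [Hy HR]].
    exists y. split; [now apply phi_encode | exact (proj2 (Hmem _ _ HR))].
  - intros x x' y Hx Hx' Hy Hy'. apply phi_encode in Hy, Hy'.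
    exact (Hinj _ _ _ (Hgraph _ _ Hx Hy) (Hgraph _ _ Hx' Hy')).
  - intros y Hy. destruct (Hsurj y Hy) as [x HR].
    exists x. split; [exact (proj1 (Hmem _ _ HR)) | now apply phi_encode, Heval].
  - intros x x' y y' Hx Hx' Hy Hy'. apply phi_encode in Hy, Hy'. apply phi_encode, Heval.
    exact (Hadd _ _ _ _ (Hgraph _ _ Hx Hy) (Hgraph _ _ Hx' Hy')).
Qed.

Fixpoint const (n : nat) : prf :=
  match n with
  | 0 => PZero
  | S k => PComp PSucc (const k)
  end.

Lemma eval_const n x : eval (const n) x n.
Proof.
  induction n as [| n IH]; [constructor | econstructor; [exact IH | constructor]].
Qed.

Lemma eval_PPrim_graph f g x (r : nat -> nat) :
  eval f x (r 0) -> (forall n, eval g (pair x (pair n (r n))) (r (S n))) ->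
  forall n, eval (PPrim f g) (pair x n) (r n).
Proof.
  intros H0 HS n; induction n; [constructor | econstructor]; eauto.
Qed.

Definition pnot : prf := PComp (PPrim (const 1) PZero) (PPair PZero PId).

Lemma eval_pnot b : eval pnot b (if b =? 0 then 1 else 0).
Proof.
  econstructor; [constructor; constructor |].
  apply (eval_PPrim_graph _ _ _ (fun b => if b =? 0 then 1 else 0)).
  - apply eval_const.
  - constructor.
Qed.

(** * Program templates *)

Inductive template (V : Type) : Type :=
| Hole (v : V)
| Lit (p : prf)
| TPair (s t : template V)
| TComp (s t : template V)
| TPrim (s t : template V)
| TMu (s : template V).
Arguments Hole {V} v.
Arguments Lit {V} p.
Arguments TPair {V} s t.
Arguments TComp {V} s t.
Arguments TPrim {V} s t.
Arguments TMu {V} s.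

Fixpoint fill {V : Type} (env : V -> prf) (t : template V) : prf :=
  match t with
  | Hole v => env v
  | Lit p => p
  | TPair s t => PPair (fill env s) (fill env t)
  | TComp s t => PComp (fill env s) (fill env t)
  | TPrim s t => PPrim (fill env s) (fill env t)
  | TMu s => PMu (fill env s)
  end.

Definition code_node (k : nat) (Q R : prf) : prf := PPair (const k) (PPair Q R).

Lemma eval_code_node k Q R x a b :
  eval Q x a -> eval R x b -> eval (code_node k Q R) x (pair k (pair a b)).
Proof.
  intros Ha Hb. constructor; [apply eval_const | now constructor].
Qed.

(* An effective s-m-n construction. *)
Fixpoint fill_code {V : Type} (code_env : V -> prf) (t : template V) : prf :=
  match t with
  | Hole v => code_env v
  | Lit p => const (encode p)
  | TPair s t => code_node 5 (fill_code code_env s) (fill_code code_env t)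
  | TComp s t => code_node 6 (fill_code code_env s) (fill_code code_env t)
  | TPrim s t => code_node 7 (fill_code code_env s) (fill_code code_env t)
  | TMu s => PPair (const 8) (fill_code code_env s)
  end.

Lemma eval_fill_code {V : Type} (code_env env : V -> prf) x :
  (forall v, eval (code_env v) x (encode (env v))) ->
  forall t, eval (fill_code code_env t) x (encode (fill env t)).
Proof.
  intros Henv t; induction t; cbn [fill fill_code encode];
    first [apply Henv | apply eval_const | apply eval_code_node; assumption
          | constructor; [apply eval_const | assumption]].
Qed.

Definition pcode_const : prf :=
  PComp (PPrim (const (encode PZero)) (code_node 6 (const (encode PSucc)) (PComp PSnd PSnd)))
    (PPair PZero PId).

Lemma eval_pcode_const n : eval pcode_const n (encode (const n)).
Proof.
  econstructor; [constructor; constructor |].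
  apply (eval_PPrim_graph _ _ _ (fun n => encode (const n))).
  - apply eval_const.
  - intro k. apply eval_code_node; [apply eval_const | econstructor; constructor].
Qed.

Inductive iso_hole := HoleE | HoleH | HoleU | HoleV.

Definition tconst (n : nat) : template iso_hole := Lit (const n).
Definition tadd (s t : template iso_hole) := TComp (Hole HoleE) (TPair (tconst 1) (TPair s t)).
Definition tneg (s : template iso_hole) := TComp (Hole HoleE) (TPair (tconst 2) s).
Definition tzero : template iso_hole := TComp (Hole HoleE) (tconst (pair 3 0)).
Definition tnatmul (w k : template iso_hole) :=
  TComp (TPrim tzero (tadd (Lit PFst) (TComp (Lit PSnd) (Lit PSnd)))) (TPair w k).
(* [w] is evaluated on an unrelated input, so it must be a constant. *)
Definition tsigned (w s : template iso_hole) := TComp (TPrim w (tneg w)) (TPair (tconst 0) s).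

(* On [pair x (pair k s)], [tshift] computes x + k u or x - k u according to [s]; [tiso]
   searches for the least such pair that lands in H and outputs x ± k u ∓ k v. *)
Definition targ_k : template iso_hole := TComp (Lit PFst) (Lit PSnd).
Definition targ_s : template iso_hole := TComp (Lit PSnd) (Lit PSnd).
Definition tshift := tadd (Lit PFst) (tnatmul (tsigned (Hole HoleU) targ_s) targ_k).
Definition tnot_in_H := TComp (Lit pnot) (TComp (Hole HoleH) tshift).
Definition tiso : template iso_hole :=
  TComp (tadd tshift (tnatmul (tsigned (tneg (Hole HoleV)) targ_s) targ_k))
    (TPair (Lit PId) (TMu tnot_in_H)).

Definition iso_env (pE pH : prf) (u v : nat) (h : iso_hole) : prf :=
  match h with
  | HoleE => pE
  | HoleH => pH
  | HoleU => const u
  | HoleV => const v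
  end.

Definition iso_program (pE pH : prf) (u v : nat) : prf := fill (iso_env pE pH u v) tiso.

Definition iso_code_env (h : iso_hole) : prf :=
  match h with
  | HoleE => PFst
  | HoleH => PComp PFst (PComp PSnd (PComp PSnd (PComp PSnd PSnd)))
  | HoleU =>
      PComp pcode_const (PComp PFst (PComp PSnd (PComp PSnd (PComp PSnd (PComp PSnd PSnd)))))
  | HoleV =>
      PComp pcode_const (PComp PSnd (PComp PSnd (PComp PSnd (PComp PSnd (PComp PSnd PSnd)))))
  end.

Definition iso_code : prf := fill_code iso_code_env tiso.

Lemma eval_iso_code pE pH eA eB eG u v :
  eval iso_code (pair (encode pE) (pair eA (pair eB (pair eG (pair (encode pH) (pair u v))))))
    (encode (iso_program pE pH u v)).
Proof.
  apply eval_fill_code. intros []; cbn [iso_code_env iso_env];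
    try (eapply ev_comp; [| apply eval_pcode_const]);
    repeat (eapply ev_comp || apply ev_fst || apply ev_snd).
Qed.

Definition zsigned (s k : nat) : Z := if s =? 0 then Z.of_nat k else (- Z.of_nat k)%Z.

Lemma zsigned_surj c : exists k s, c = zsigned s k.
Proof.
  destruct (Z.leb_spec 0 c).
  - exists (Z.to_nat c), 0. unfold zsigned; simpl. lia.
  - exists (Z.to_nat (- c)), 1. unfold zsigned; simpl. lia.
Qed.

(** * Abelian groups *)

Section AbelianGroup.

Variables (dom : nat -> bool) (add : nat -> nat -> nat) (neg : nat -> nat) (z : nat).
Hypothesis HG : IsAbGroup dom add neg z.
Local Notation inE x := (dom x = true).

Lemma dom_zero : inE z. Proof. apply HG. Qed.
Lemma dom_add x y : inE x -> inE y -> inE (add x y). Proof. apply HG. Qed.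
Lemma dom_neg x : inE x -> inE (neg x). Proof. apply HG. Qed.
Lemma add_assoc x y w : inE x -> inE y -> inE w -> add x (add y w) = add (add x y) w.
Proof. apply HG. Qed.
Lemma add_comm x y : inE x -> inE y -> add x y = add y x. Proof. apply HG. Qed.
Lemma add_0l x : inE x -> add z x = x. Proof. apply HG. Qed.
Lemma add_Nl x : inE x -> add (neg x) x = z. Proof. apply HG. Qed.

#[local] Hint Resolve dom_zero dom_add dom_neg : grp.

Lemma add_0r x : inE x -> add x z = x.
Proof. intro Hx. rewrite add_comm; auto using add_0l with grp. Qed.

Lemma add_Nr x : inE x -> add x (neg x) = z.
Proof. intro Hx. rewrite add_comm; auto using add_Nl with grp. Qed.

Lemma add_cancel_l a x y : inE a -> inE x -> inE y -> add a x = add a y -> x = y.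
Proof.
  intros Ha Hx Hy E.
  rewrite <- (add_0l x), <- (add_0l y), <- (add_Nl a), <- !add_assoc, E by auto with grp.
  reflexivity.
Qed.

Lemma neg_unique x y : inE x -> inE y -> add x y = z -> y = neg x.
Proof.
  intros Hx Hy E. apply (add_cancel_l x); auto with grp. now rewrite add_Nr.
Qed.

Lemma neg_involutive x : inE x -> neg (neg x) = x.
Proof. intro Hx. symmetry. apply neg_unique; auto using add_Nl with grp. Qed.

Lemma neg_zero : neg z = z.
Proof. symmetry. apply neg_unique; auto using add_0l with grp. Qed.

Lemma add_shuffle a b c d : inE a -> inE b -> inE c -> inE d ->
  add (add a b) (add c d) = add (add a c) (add b d).
Proof.
  intros. rewrite <- !add_assoc by auto with grp. f_equal.
  rewrite !add_assoc by auto with grp. f_equal. now apply add_comm.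
Qed.

Lemma neg_add x y : inE x -> inE y -> neg (add x y) = add (neg x) (neg y).
Proof.
  intros Hx Hy. symmetry. apply neg_unique; auto with grp.
  rewrite add_shuffle, !add_Nr, add_0l; auto with grp.
Qed.

Lemma dom_natmul n x : inE x -> inE (natmul add z n x).
Proof. intro Hx. induction n; simpl; auto with grp. Qed.

Definition zmul (k : Z) (x : nat) : nat :=
  if (0 <=? k)%Z then natmul add z (Z.to_nat k) x else neg (natmul add z (Z.to_nat (- k)) x).

Lemma dom_zmul k x : inE x -> inE (zmul k x).
Proof. intro Hx. unfold zmul. destruct (0 <=? k)%Z; auto using dom_natmul with grp. Qed.

#[local] Hint Resolve dom_natmul dom_zmul : grp.

Lemma zmul_of_nat n x : zmul (Z.of_nat n) x = natmul add z n x.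
Proof. unfold zmul. destruct (Z.leb_spec 0 (Z.of_nat n)); [now rewrite Nat2Z.id | lia]. Qed.

Lemma zmul_opp_of_nat n x : zmul (- Z.of_nat n) x = neg (natmul add z n x).
Proof.
  unfold zmul. destruct (Z.leb_spec 0 (- Z.of_nat n)).
  - replace n with 0 by lia. simpl. now rewrite neg_zero.
  - now rewrite Z.opp_involutive, Nat2Z.id.
Qed.

Lemma zmul_succ k x : inE x -> zmul (Z.succ k) x = add x (zmul k x).
Proof.
  intros Hx. destruct (Z.leb_spec 0 k).
  - rewrite <- (Z2Nat.id k) by assumption.
    now rewrite <- Nat2Z.inj_succ, !zmul_of_nat.
  - set (n := Z.to_nat (- Z.succ k)).
    replace (Z.succ k) with (- Z.of_nat n)%Z by lia.
    replace k with (- Z.of_nat (S n))%Z by lia.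
    rewrite !zmul_opp_of_nat. simpl (natmul add z (S n) x).
    rewrite neg_add, add_assoc, add_Nr, add_0l; auto with grp.
Qed.

Lemma zmul_pred k x : inE x -> zmul (Z.pred k) x = add (neg x) (zmul k x).
Proof.
  intro Hx. rewrite <- (Z.succ_pred k) at 2.
  rewrite zmul_succ, add_assoc, add_Nl, add_0l; auto with grp.
Qed.

Lemma zmul_add_distr_r k l x : inE x -> zmul (k + l) x = add (zmul k x) (zmul l x).
Proof.
  intro Hx. induction l using Z.peano_ind.
  - now rewrite Z.add_0_r, add_0r by auto with grp.
  - rewrite Z.add_succ_r, !zmul_succ, IHl, !add_assoc, (add_comm x); auto with grp.
  - rewrite Z.add_pred_r, !zmul_pred, IHl, !add_assoc, (add_comm (neg x)); auto with grp.
Qed.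

Lemma zmul_add_distr_l k x y : inE x -> inE y -> zmul k (add x y) = add (zmul k x) (zmul k y).
Proof.
  intros Hx Hy. induction k using Z.peano_ind.
  - symmetry. apply add_0l, dom_zero.
  - rewrite !zmul_succ, IHk, add_shuffle; auto with grp.
  - rewrite !zmul_pred, IHk, neg_add, add_shuffle; auto with grp.
Qed.

Lemma zmul_opp k x : inE x -> zmul (- k) x = neg (zmul k x).
Proof.
  intro Hx. induction k using Z.peano_ind.
  - symmetry. apply neg_zero.
  - rewrite Z.opp_succ, zmul_pred, zmul_succ, IHk, neg_add; auto with grp.
  - rewrite Z.opp_pred, zmul_pred, zmul_succ, IHk, neg_add, neg_involutive; auto with grp.
Qed.

Lemma zmul_mul k l x : inE x -> zmul (k * l) x = zmul k (zmul l x).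
Proof.
  intro Hx. induction k using Z.peano_ind.
  - reflexivity.
  - rewrite Z.mul_succ_l, zmul_add_distr_r, zmul_succ, IHk, add_comm; auto with grp.
  - rewrite Z.mul_pred_l, <- Z.add_opp_r, zmul_add_distr_r, zmul_pred, IHk, zmul_opp, add_comm;
      auto with grp.
Qed.

Lemma zmul_zero k : zmul k z = z.
Proof.
  induction k using Z.peano_ind.
  - reflexivity.
  - rewrite zmul_succ, IHk, add_0l; auto with grp.
  - rewrite zmul_pred, IHk, neg_zero, add_0l; auto with grp.
Qed.

Lemma zmul_neg k x : inE x -> zmul k (neg x) = neg (zmul k x).
Proof.
  intro Hx. apply neg_unique; auto with grp.
  now rewrite <- zmul_add_distr_l, add_Nr, zmul_zero by auto with grp.
Qed.

Lemma zmul_eq_of_sub_eq0 k l x : inE x -> zmul (k - l) x = z -> zmul k x = zmul l x.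
Proof.
  intros Hx Hkl. replace k with (k - l + l)%Z by ring.
  rewrite zmul_add_distr_r, Hkl, add_0l; auto with grp.
Qed.

Definition signed (s x : nat) : nat := if s =? 0 then x else neg x.

Lemma dom_signed s x : inE x -> inE (signed s x).
Proof. intro Hx. unfold signed. destruct (s =? 0); auto with grp. Qed.

#[local] Hint Resolve dom_signed : grp.

Lemma natmul_signed s k x : inE x -> natmul add z k (signed s x) = zmul (zsigned s k) x.
Proof.
  intro Hx. unfold signed, zsigned. destruct (s =? 0).
  - now rewrite zmul_of_nat.
  - now rewrite zmul_opp, <- zmul_neg, zmul_of_nat.
Qed.

Lemma InCyclic_zmul a y : InCyclic add neg z a y <-> exists k, y = zmul k a.
Proof.
  split.
  - intros [n [-> | ->]]; [exists (Z.of_nat n) | exists (- Z.of_nat n)%Z].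
    + now rewrite zmul_of_nat.
    + now rewrite zmul_opp_of_nat.
  - intros [k ->]. unfold zmul. destruct (0 <=? k)%Z; eexists; [left | right]; reflexivity.
Qed.

Section Subgroup.

Variable mem : nat -> bool.
Hypothesis HS : IsSubgroup dom add neg z mem.

Lemma subgroup_dom x : mem x = true -> inE x. Proof. apply HS. Qed.
Lemma subgroup_zero : mem z = true. Proof. apply HS. Qed.
Lemma subgroup_add x y : mem x = true -> mem y = true -> mem (add x y) = true.
Proof. apply HS. Qed.
Lemma subgroup_neg x : mem x = true -> mem (neg x) = true. Proof. apply HS. Qed.

Lemma subgroup_zmul k x : mem x = true -> mem (zmul k x) = true.
Proof.
  intro Hx. pose proof (subgroup_dom x Hx). induction k using Z.peano_ind.
  - exact subgroup_zero.
  - rewrite zmul_succ by assumption. now apply subgroup_add.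
  - rewrite zmul_pred by assumption. apply subgroup_add; [apply subgroup_neg |]; assumption.
Qed.

End Subgroup.

Section Homomorphism.

Variables (memA memB : nat -> bool) (h : nat -> nat).
Hypotheses (SA : IsSubgroup dom add neg z memA) (SB : IsSubgroup dom add neg z memB).
Hypothesis Hmap : forall x, memA x = true -> memB (h x) = true.
Hypothesis Hhom : forall x y, memA x = true -> memA y = true -> h (add x y) = add (h x) (h y).

Lemma hom_zero : h z = z.
Proof.
  pose proof (subgroup_zero _ SA) as Hz.
  pose proof (subgroup_dom _ SB _ (Hmap _ Hz)) as Dh.
  apply (add_cancel_l (h z)); auto with grp.
  now rewrite add_0r, <- Hhom, add_0l by auto with grp.
Qed.

Lemma hom_neg x : memA x = true -> h (neg x) = neg (h x).
Proof.
  intro Hx. pose proof (subgroup_neg _ SA _ Hx) as HNx.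
  apply neg_unique; eauto using subgroup_dom.
  now rewrite <- Hhom, add_Nr, hom_zero by eauto using subgroup_dom.
Qed.

Lemma hom_zmul k x : memA x = true -> h (zmul k x) = zmul k (h x).
Proof.
  intro Hx. pose proof (subgroup_dom _ SA _ Hx).
  pose proof (subgroup_dom _ SB _ (Hmap _ Hx)).
  induction k using Z.peano_ind.
  - exact hom_zero.
  - rewrite !zmul_succ, Hhom, IHk; auto using subgroup_zmul.
  - rewrite !zmul_pred, Hhom, IHk, hom_neg; auto using subgroup_zmul, subgroup_neg.
Qed.

End Homomorphism.

Lemma zmul_decompose (memA memG : nat -> bool) (memD : nat -> Prop) alpha u m :
  InternalDirectSum add z (fun x => inE x) (fun x => memA x = true) (fun x => memG x = true) ->
  InternalDirectSum add z (fun x => memG x = true) (InCyclic add neg z u) memD ->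
  (forall x, memA x = true -> exists k, x = zmul k alpha) ->
  (forall d, memD d -> inE d) -> inE alpha -> inE u ->
  zmul m u = z ->
  forall x, inE x -> exists i d, memD d /\ zmul m x = add (zmul (m * i) alpha) (zmul m d).
Proof.
  intros [_ [_ [_ HAG]]] [_ [_ [_ HuD]]] HAcyc HDdom Dalpha Du Hm x Dx.
  destruct (HAG x Dx) as [a [g [Ha [Hg ->]]]].
  destruct (HAcyc a Ha) as [i ->].
  destruct (HuD g Hg) as [c [d [Hc [Hd ->]]]].
  apply InCyclic_zmul in Hc as [j ->].
  exists i, d. split; [exact Hd |].
  assert (Hmc : zmul m (zmul j u) = z).
  { now rewrite <- zmul_mul, Z.mul_comm, zmul_mul, Hm, zmul_zero. }
  rewrite !zmul_add_distr_l, Hmc, add_0l, zmul_mul; auto with grp.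
Qed.

Lemma annihilator_transfer (memA memG memB memH : nat -> bool) (memD : nat -> Prop)
    alpha beta u v :
  IsSubgroup dom add neg z memA -> IsSubgroup dom add neg z memG ->
  IsSubgroup dom add neg z memB -> IsSubgroup dom add neg z memH ->
  (forall x, memD x <-> memG x = true /\ memH x = true) ->
  InternalDirectSum add z (fun x => inE x) (fun x => memA x = true) (fun x => memG x = true) ->
  InternalDirectSum add z (fun x => inE x) (fun x => memB x = true) (fun x => memH x = true) ->
  InternalDirectSum add z (fun x => memG x = true) (InCyclic add neg z u) memD ->
  InternalDirectSum add z (fun x => memH x = true) (InCyclic add neg z v) memD ->
  memG u = true -> memH v = true ->
  memA alpha = true -> (forall x, memA x = true -> exists k, x = zmul k alpha) ->
  memB beta = true -> (forall k, zmul k alpha = z <-> zmul k beta = z) ->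
  forall m, zmul m u = z -> zmul m v = z.
Proof.
  intros SA SG SB SH HD HAG HBH HGu HHv Hu Hv Halpha HAcyc Hbeta Hann m Hm.
  destruct HBH as [_ [_ [HBH0 _]]]. destruct HHv as [_ [_ [HvD0 _]]].
  assert (HDdom : forall d, memD d -> inE d).
  { intros d Hd. apply HD in Hd as [Hd _]. exact (subgroup_dom _ SG _ Hd). }
  assert (HDzmul : forall k d, memD d -> memD (zmul k d)).
  { intros k d Hd. apply HD in Hd as [HdG HdH]. apply HD.
    split; now apply subgroup_zmul. }
  assert (HDH : forall d, memD d -> memH d = true) by (intros d Hd; now apply HD).
  pose proof (subgroup_dom _ SA _ Halpha) as Dalpha.
  pose proof (subgroup_dom _ SG _ Hu) as Du.
  pose proof (subgroup_dom _ SB _ Hbeta) as Dbeta.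
  pose proof (subgroup_dom _ SH _ Hv) as Dv.
  destruct (zmul_decompose memA memG memD alpha u m HAG HGu HAcyc HDdom Dalpha Du Hm beta Dbeta)
    as [i [d [Hd Ebeta]]].
  destruct (zmul_decompose memA memG memD alpha u m HAG HGu HAcyc HDdom Dalpha Du Hm v Dv)
    as [i' [d' [Hd' Ev]]].
  pose proof (HDdom d Hd) as Dd. pose proof (HDdom d' Hd') as Dd'.
  set (e := zmul i' (zmul m d)). set (e' := zmul i (zmul m d')).
  assert (De : inE e) by (unfold e; auto with grp).
  assert (De' : inE e') by (unfold e'; auto with grp).
  (* [i' m beta] differs from [i m v] by an element of D, so it lies in B ∩ H. *)
  assert (Eb : zmul i' (zmul m beta) = add (zmul i (zmul m v)) (add (neg e') e)).
  { rewrite Ebeta, Ev, !zmul_add_distr_l by auto with grp. fold e e'.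
    rewrite <- (zmul_mul i'), <- (zmul_mul i) by auto with grp.
    replace (i * (m * i'))%Z with (i' * (m * i))%Z by ring.
    rewrite <- add_assoc, (add_assoc e'), add_Nr, add_0l; auto with grp. }
  assert (Hb0 : zmul i' (zmul m beta) = z).
  { apply HBH0.
    - now apply (subgroup_zmul _ SB), (subgroup_zmul _ SB).
    - rewrite Eb. apply (subgroup_add _ SH).
      + now apply (subgroup_zmul _ SH), (subgroup_zmul _ SH).
      + apply (subgroup_add _ SH); [apply (subgroup_neg _ SH) |]; apply HDH, HDzmul, HDzmul;
          assumption. }
  assert (Halpha0 : zmul (i' * m) alpha = z) by (apply Hann; now rewrite zmul_mul).
  assert (Emv : zmul m v = zmul m d').
  { now rewrite Ev, Z.mul_comm, Halpha0, add_0l by auto with grp. }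
  apply HvD0.
  - apply InCyclic_zmul. now exists m.
  - rewrite Emv. now apply HDzmul.
Qed.

(** * The isomorphism G → H *)

Section Complements.

Variables (memA memB memG memH : nat -> bool) (u v : nat).
Hypotheses (SA : IsSubgroup dom add neg z memA) (SB : IsSubgroup dom add neg z memB)
  (SG : IsSubgroup dom add neg z memG) (SH : IsSubgroup dom add neg z memH).
Hypothesis HAG :
  InternalDirectSum add z (fun x => inE x) (fun x => memA x = true) (fun x => memG x = true).
Hypothesis HBH :
  InternalDirectSum add z (fun x => inE x) (fun x => memB x = true) (fun x => memH x = true).
Hypothesis Hiso : SubgroupsIsomorphic add memA memB.
Hypothesis HcA : IsCyclic add neg z memA.
Hypotheses (Hu : memG u = true) (Hv : memH v = true).
Hypothesis HGu : InternalDirectSum add z (fun x => memG x = true)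
  (InCyclic add neg z u) (fun x => memG x = true /\ memH x = true).
Hypothesis HHv : InternalDirectSum add z (fun x => memH x = true)
  (InCyclic add neg z v) (fun x => memG x = true /\ memH x = true).

Local Notation memD d := (memG d = true /\ memH d = true).

Let Du : inE u := subgroup_dom memG SG u Hu.
Let Dv : inE v := subgroup_dom memH SH v Hv.
Let memD_dom d (Hd : memD d) : inE d := subgroup_dom memG SG d (proj1 Hd).
#[local] Hint Resolve Du Dv memD_dom : grp.

Lemma memD_add d d' : memD d -> memD d' -> memD (add d d').
Proof.
  intros [] []. split; [apply (subgroup_add _ SG) | apply (subgroup_add _ SH)]; assumption.
Qed.

Lemma memD_neg d : memD d -> memD (neg d).
Proof.
  intros []. split; [apply (subgroup_neg _ SG) | apply (subgroup_neg _ SH)]; assumption.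
Qed.

Lemma same_annihilator m : zmul m u = z <-> zmul m v = z.
Proof.
  destruct HcA as [alpha [Halpha HA]].
  destruct Hiso as [h [Hmap [Hinj [Hsurj Hhom]]]].
  pose proof (hom_zero memA memB h SA SB Hmap Hhom) as Hh0.
  pose proof (hom_zmul memA memB h SA SB Hmap Hhom) as Hhk.
  assert (HAcyc : forall x, memA x = true -> exists k, x = zmul k alpha).
  { intros x Hx. now apply InCyclic_zmul, HA. }
  assert (HBcyc : forall y, memB y = true -> exists k, y = zmul k (h alpha)).
  { intros y Hy. destruct (Hsurj y Hy) as [x [Hx <-]]. destruct (HAcyc x Hx) as [k ->].
    exists k. now apply Hhk. }
  assert (Hann : forall k, zmul k alpha = z <-> zmul k (h alpha) = z).
  { intro k. rewrite <- Hhk by assumption. split; intro E.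
    - now rewrite E.
    - apply Hinj; [now apply (subgroup_zmul _ SA) | apply (subgroup_zero _ SA) | congruence]. }
  split.
  - apply (annihilator_transfer memA memG memB memH (fun x => memD x) alpha (h alpha));
      auto; tauto.
  - apply (annihilator_transfer memB memH memA memG (fun x => memD x) (h alpha) alpha);
      auto; [tauto | intro k; now rewrite Hann].
Qed.

Lemma cyclic_sum_unique memX w : inE w ->
  InternalDirectSum add z (fun x => memX x = true) (InCyclic add neg z w) (fun x => memD x) ->
  forall k k' d d', memD d -> memD d' -> add (zmul k w) d = add (zmul k' w) d' ->
  zmul (k - k') w = z /\ d = d'.
Proof.
  intros Dw [_ [_ [Hw0 _]]] k k' d d' Hd Hd' E.
  assert (Ed : d' = add (zmul (k - k') w) d).
  { rewrite <- Z.add_opp_r, zmul_add_distr_r, zmul_opp, (add_comm (zmul k w)) by auto with grp.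
    rewrite <- add_assoc, E, add_assoc, add_Nl, add_0l; auto with grp. }
  assert (Hkk' : zmul (k - k') w = z).
  { apply Hw0; [apply InCyclic_zmul; eauto |].
    replace (zmul (k - k') w) with (add d' (neg d)) by
      (rewrite Ed, <- add_assoc, add_Nr, add_0r; auto with grp).
    auto using memD_add, memD_neg. }
  split; [exact Hkk' |]. rewrite Ed, Hkk', add_0l; auto with grp.
Qed.

Definition iso_graph (x y : nat) : Prop :=
  exists k d, memD d /\ x = add (zmul k u) d /\ y = add (zmul k v) d.

Lemma iso_graph_mem x y : iso_graph x y -> memG x = true /\ memH y = true.
Proof.
  intros [k [d [[HdG HdH] [-> ->]]]].
  split; [apply (subgroup_add _ SG) | apply (subgroup_add _ SH)];
    auto using subgroup_zmul.
Qed.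

Lemma iso_graph_fun x y y' : iso_graph x y -> iso_graph x y' -> y = y'.
Proof.
  intros [k [d [Hd [-> ->]]]] [k' [d' [Hd' [E ->]]]].
  destruct (cyclic_sum_unique memG u Du HGu k k' d d' Hd Hd' E) as [Hkk' <-].
  apply same_annihilator, zmul_eq_of_sub_eq0 in Hkk' as ->; auto.
Qed.

Lemma iso_graph_inj x x' y : iso_graph x y -> iso_graph x' y -> x = x'.
Proof.
  intros [k [d [Hd [-> ->]]]] [k' [d' [Hd' [-> E]]]].
  destruct (cyclic_sum_unique memH v Dv HHv k k' d d' Hd Hd' E) as [Hkk' <-].
  apply same_annihilator, zmul_eq_of_sub_eq0 in Hkk' as ->; auto.
Qed.

Lemma iso_graph_add x y x' y' :
  iso_graph x y -> iso_graph x' y' -> iso_graph (add x x') (add y y').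
Proof.
  intros [k [d [Hd [-> ->]]]] [k' [d' [Hd' [-> ->]]]].
  exists (k + k')%Z, (add d d'). split; [now apply memD_add |].
  rewrite !zmul_add_distr_r by auto with grp.
  split; apply add_shuffle; auto with grp.
Qed.

Lemma iso_graph_surj y : memH y = true -> exists x, iso_graph x y.
Proof.
  intro Hy. destruct HHv as [_ [_ [_ Hdec]]].
  destruct (Hdec y Hy) as [c [d [Hc [Hd ->]]]]. apply InCyclic_zmul in Hc as [k ->].
  exists (add (zmul k u) d), k, d. auto.
Qed.

Lemma shift_into_H x : memG x = true -> exists c, memH (add x (zmul c u)) = true.
Proof.
  intro Hx. destruct HGu as [_ [_ [_ Hdec]]].
  destruct (Hdec x Hx) as [c [d [Hc [[HdG HdH] ->]]]]. apply InCyclic_zmul in Hc as [k ->].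
  exists (- k)%Z.
  rewrite zmul_opp, (add_comm _ d), <- add_assoc, add_Nr, add_0r; auto with grp.
Qed.

Lemma iso_graph_shift x c : memG x = true -> memH (add x (zmul c u)) = true ->
  iso_graph x (add (add x (zmul c u)) (zmul c (neg v))).
Proof.
  intros Hx Hxc. pose proof (subgroup_dom _ SG _ Hx).
  exists (- c)%Z, (add x (zmul c u)). repeat split.
  - apply (subgroup_add _ SG); auto using subgroup_zmul.
  - exact Hxc.
  - rewrite zmul_opp, (add_comm x), add_assoc, add_Nl, add_0l; auto with grp.
  - rewrite zmul_opp, zmul_neg, add_comm; auto with grp.
Qed.

Section Evaluation.

Variables pE pH : prf.
Hypothesis HpE : Presents (encode pE) dom add neg z.
Hypothesis HpH : CharIndex (encode pH) memH.

Local Notation env := (iso_env pE pH u v).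

Lemma eval_tadd s t x a b : eval (fill env s) x a -> eval (fill env t) x b -> inE a -> inE b ->
  eval (fill env (tadd s t)) x (add a b).
Proof.
  intros Ha Hb Da Db. cbn [fill tadd tconst]. eapply ev_comp.
  - constructor; [apply eval_const | constructor; eassumption].
  - apply phi_encode, (proj1 (proj2 HpE)); assumption.
Qed.

Lemma eval_tneg s x a : eval (fill env s) x a -> inE a -> eval (fill env (tneg s)) x (neg a).
Proof.
  intros Ha Da. cbn [fill tneg tconst]. eapply ev_comp.
  - constructor; [apply eval_const | exact Ha].
  - apply phi_encode, (proj1 (proj2 (proj2 HpE))), Da.
Qed.

Lemma eval_tzero x : eval (fill env tzero) x z.
Proof.
  cbn [fill tzero tconst].
  eapply ev_comp; [apply eval_const | apply phi_encode, (proj2 (proj2 (proj2 HpE)))].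
Qed.

Lemma eval_tnatmul w k x a n : eval (fill env w) x a -> eval (fill env k) x n -> inE a ->
  eval (fill env (tnatmul w k)) x (natmul add z n a).
Proof.
  intros Ha Hn Da. cbn [fill tnatmul]. eapply ev_comp; [constructor; eassumption |].
  apply (eval_PPrim_graph _ _ _ (fun n => natmul add z n a)); [apply eval_tzero |].
  intro m. apply (eval_tadd _ _ _ a (natmul add z m a)); auto with grp.
  - apply ev_fst.
  - eapply ev_comp; apply ev_snd.
Qed.

Lemma eval_tsigned w s x a n : (forall y, eval (fill env w) y a) -> inE a ->
  eval (fill env s) x n -> eval (fill env (tsigned w s)) x (signed n a).
Proof.
  intros Ha Da Hn. cbn [fill tsigned tconst].
  eapply ev_comp; [constructor; [apply eval_const | exact Hn] |].
  apply (eval_PPrim_graph _ _ _ (fun n => signed n a)); [apply Ha |].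
  intro m. now apply eval_tneg.
Qed.

Lemma eval_tshift x k s : inE x ->
  eval (fill env tshift) (pair x (pair k s)) (add x (zmul (zsigned s k) u)).
Proof.
  intro Dx. rewrite <- natmul_signed by auto with grp.
  apply eval_tadd; [apply ev_fst | | auto with grp ..].
  apply eval_tnatmul; [| eapply ev_comp; [apply ev_snd | apply ev_fst] | auto with grp].
  apply eval_tsigned; [intro; apply eval_const | auto with grp | eapply ev_comp; apply ev_snd].
Qed.

Lemma eval_tnot_in_H x k s : inE x ->
  eval (fill env tnot_in_H) (pair x (pair k s))
    (if memH (add x (zmul (zsigned s k) u)) then 0 else 1).
Proof.
  intro Dx. cbn [fill tnot_in_H].
  eapply ev_comp; [eapply ev_comp; [apply eval_tshift, Dx | apply phi_encode, HpH] |].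
  destruct (memH (add x (zmul (zsigned s k) u))); apply eval_pnot.
Qed.

Lemma eval_tnot_in_H_zero x k s : inE x ->
  eval (fill env tnot_in_H) (pair x (pair k s)) 0 <->
  memH (add x (zmul (zsigned s k) u)) = true.
Proof.
  intro Dx. pose proof (eval_tnot_in_H x k s Dx) as Ht.
  destruct (memH (add x (zmul (zsigned s k) u))); split; intro H.
  - reflexivity.
  - exact Ht.
  - discriminate (eval_det _ _ _ _ H Ht).
  - discriminate H.
Qed.

Lemma search_halts x : memG x = true ->
  exists k s, memH (add x (zmul (zsigned s k) u)) = true /\
    eval (PMu (fill env tnot_in_H)) x (pair k s).
Proof.
  intro Hx. pose proof (subgroup_dom _ SG _ Hx) as Dx.
  set (found t := eval (fill env tnot_in_H) (pair x t) 0).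
  assert (Hex : exists t, found t).
  { destruct (shift_into_H x Hx) as [c Hc]. destruct (zsigned_surj c) as [k [s ->]].
    exists (pair k s). now apply eval_tnot_in_H_zero. }
  destruct (dec_inh_nat_subset_has_unique_least_element found (fun t => classic (found t)) Hex)
    as [t [[Ht Hleast] _]].
  destruct (pair_surj t) as [k [s ->]].
  exists k, s. split; [now apply eval_tnot_in_H_zero in Ht |].
  constructor; [exact Ht |].
  intros m Hm. destruct (pair_surj m) as [k' [s' ->]].
  pose proof (eval_tnot_in_H x k' s' Dx) as Hm'.
  destruct (memH (add x (zmul (zsigned s' k') u))) eqn:Hin.
  - apply (eval_tnot_in_H_zero x k' s' Dx), Hleast in Hin. lia.
  - now exists 0.
Qed.

Lemma eval_iso_program x k s : inE x -> eval (PMu (fill env tnot_in_H)) x (pair k s) ->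
  eval (iso_program pE pH u v) x
    (add (add x (zmul (zsigned s k) u)) (zmul (zsigned s k) (neg v))).
Proof.
  intros Dx Hsearch. apply (ev_comp _ _ _ (pair x (pair k s))).
  { constructor; [constructor | exact Hsearch]. }
  rewrite <- (natmul_signed s k (neg v)) by auto with grp.
  apply eval_tadd; [apply eval_tshift, Dx | | auto with grp ..].
  apply eval_tnatmul; [| eapply ev_comp; [apply ev_snd | apply ev_fst] | auto with grp].
  apply eval_tsigned; [| auto with grp | eapply ev_comp; apply ev_snd].
  intro. apply eval_tneg; [apply eval_const | auto with grp].
Qed.

Lemma iso_program_graph x : memG x = true ->
  exists y, eval (iso_program pE pH u v) x y /\ iso_graph x y.
Proof.
  intro Hx. destruct (search_halts x Hx) as [k [s [Hin Hsearch]]].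
  eexists. split.
  - exact (eval_iso_program x k s (subgroup_dom _ SG _ Hx) Hsearch).
  - now apply iso_graph_shift.
Qed.

Theorem iso_program_correct : IsComputableIso (encode (iso_program pE pH u v)) add memG memH.
Proof.
  apply computable_iso_of_graph with iso_graph.
  - exact iso_program_graph.
  - exact iso_graph_mem.
  - exact iso_graph_fun.
  - exact iso_graph_inj.
  - exact iso_graph_surj.
  - exact iso_graph_add.
Qed.

End Evaluation.

End Complements.

End AbelianGroup.

Theorem lemma2p4 :
  exists f : nat,
  forall (eE eA eB eG eH : nat)
    (domE : nat -> bool) (addE : nat -> nat -> nat) (negE : nat -> nat) (zE : nat)
    (memA memB memG memH : nat -> bool) (u v : nat),
    Presents eE domE addE negE zE ->
    IsAbGroup domE addE negE zE ->
    CharIndex eA memA -> CharIndex eB memB ->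
    CharIndex eG memG -> CharIndex eH memH ->
    IsSubgroup domE addE negE zE memA -> IsSubgroup domE addE negE zE memB ->
    IsSubgroup domE addE negE zE memG -> IsSubgroup domE addE negE zE memH ->
    InternalDirectSum addE zE (fun x => domE x = true)
      (fun x => memA x = true) (fun x => memG x = true) ->
    InternalDirectSum addE zE (fun x => domE x = true)
      (fun x => memB x = true) (fun x => memH x = true) ->
    SubgroupsIsomorphic addE memA memB ->
    IsCyclic addE negE zE memA -> IsCyclic addE negE zE memB ->
    memG u = true -> memH v = true ->
    InternalDirectSum addE zE (fun x => memG x = true)
      (InCyclic addE negE zE u) (fun x => memG x = true /\ memH x = true) ->
    InternalDirectSum addE zE (fun x => memH x = true)
      (InCyclic addE negE zE v) (fun x => memG x = true /\ memH x = true) ->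
    exists i : nat,
      phi f (pair eE (pair eA (pair eB (pair eG (pair eH (pair u v)))))) i /\
      IsComputableIso i addE memG memH.
Proof.
  exists (encode iso_code).
  intros eE eA eB eG eH dom add neg z memA memB memG memH u v
    HpE HG _ _ _ HcH SA SB SG SH HAG HBH Hiso HcA _ Hu Hv HGu HHv.
  destruct (proj2 (proj2 (proj2 HpE))) as [pE [<- _]].
  destruct (HcH 0) as [pH [<- _]].
  exists (encode (iso_program pE pH u v)). split.
  - apply phi_encode, eval_iso_code.
  - exact (iso_program_correct dom add neg z HG memA memB memG memH u v
      SA SB SG SH HAG HBH Hiso HcA Hu Hv HGu HHv pE pH HpE HcH).
Qed.
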